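(* Let $\{\omega_m\}$ be a sequence of positive real numbers with $\omega_m\to\infty$, and let $z_m=a_m-\mathrm{i}b_m$ with $a_m,b_m\geq 0$. Suppose there exist constants $c_1, c_2>0$ such that $b_m\geq c_1 \omega_m$ and $b_m\geq c_2 a_m$ for all $m$. Then for all sufficiently large $m$, $z=z_m$ satisfies neither of the equations \[ \frac{\omega_m-z}{\omega_m+z}= e^{-\mathrm{i}z},\qquad \frac{\omega_m-z}{\omega_m+z}= -e^{-\mathrm{i}z}. \] *)

From Stdlib Require Import Reals.
Open Scope R_scope.

Definition Cplx : Type := (R * R)%type.
Definition RtoC (x : R) : Cplx := (x, 0).
Definition Ci : Cplx := (0, 1).
Definition Cadd (z w : Cplx) : Cplx := (fst z + fst w, snd z + snd w).
Definition Copp (z : Cplx) : Cplx := (- fst z, - snd z).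
Definition Csub (z w : Cplx) : Cplx := Cadd z (Copp w).
Definition Cmul (z w : Cplx) : Cplx :=
  (fst z * fst w - snd z * snd w, fst z * snd w + snd z * fst w).
Definition Cinv (z : Cplx) : Cplx :=
  (fst z / (fst z ^ 2 + snd z ^ 2), - snd z / (fst z ^ 2 + snd z ^ 2)).
Definition Cdiv (z w : Cplx) : Cplx := Cmul z (Cinv w).
Definition Cexp (z : Cplx) : Cplx := (exp (fst z) * cos (snd z), exp (fst z) * sin (snd z)).

(* Compare moduli. For z = a - i b the left-hand side has squared modulus
   ((w - a)^2 + b^2) / ((w + a)^2 + b^2), which stays above 1 / (s^2 + 1)
   as soon as w + a <= s b; here s = 1/c1 + 1/c2 works for every m.  Both
   right-hand sides have squared modulus e^(-2b), and b >= c1 w tends to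
   infinity, so they eventually drop below that bound. *)
From Stdlib Require Import Reals Lra Psatz.
Open Scope R_scope.

Definition Cnorm2 (z : Cplx) : R := fst z ^ 2 + snd z ^ 2.

Lemma Cnorm2_mul (z w : Cplx) : Cnorm2 (Cmul z w) = Cnorm2 z * Cnorm2 w.
Proof. destruct z, w; unfold Cnorm2, Cmul; simpl; ring. Qed.

Lemma Cnorm2_inv (w : Cplx) : Cnorm2 w <> 0 -> Cnorm2 (Cinv w) = / Cnorm2 w.
Proof.
  destruct w as [x y]; unfold Cnorm2, Cinv; simpl; intros Hw.
  field; intro H; apply Hw; lra.
Qed.

Lemma Cnorm2_div (z w : Cplx) :
  Cnorm2 w <> 0 -> Cnorm2 (Cdiv z w) = Cnorm2 z / Cnorm2 w.
Proof. intros Hw; unfold Cdiv; rewrite Cnorm2_mul, Cnorm2_inv; easy. Qed.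

Lemma Cnorm2_opp (z : Cplx) : Cnorm2 (Copp z) = Cnorm2 z.
Proof. destruct z; unfold Cnorm2, Copp; simpl; ring. Qed.

Lemma Cnorm2_exp (z : Cplx) : Cnorm2 (Cexp z) = exp (fst z) ^ 2.
Proof.
  destruct z as [x y]; unfold Cnorm2, Cexp; simpl.
  pose proof (sin2_cos2 y) as Hpyth; unfold Rsqr in Hpyth.
  transitivity (exp x * exp x * (sin y * sin y + cos y * cos y)); [ring|].
  rewrite Hpyth; ring.
Qed.

Lemma Cnorm2_exp_opp_mul_i (z : Cplx) :
  Cnorm2 (Cexp (Copp (Cmul Ci z))) = exp (snd z) ^ 2.
Proof. rewrite Cnorm2_exp; destruct z; unfold Copp, Cmul, Ci; simpl; do 3 f_equal; ring. Qed.

Lemma neq_pm_of_Cnorm2_lt (u v : Cplx) :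
  Cnorm2 v < Cnorm2 u -> u <> v /\ u <> Copp v.
Proof.
  intros Hlt; split; intros ->; [|rewrite Cnorm2_opp in Hlt]; lra.
Qed.

Lemma Cnorm2_moebius (w a b : R) : 0 < b ->
  Cnorm2 (Cdiv (Csub (RtoC w) (a, - b)) (Cadd (RtoC w) (a, - b)))
  = ((w - a) ^ 2 + b ^ 2) / ((w + a) ^ 2 + b ^ 2).
Proof.
  intros Hb; rewrite Cnorm2_div;
    unfold Cnorm2, Csub, Cadd, Copp, RtoC; simpl.
  - f_equal; ring.
  - pose proof (Rle_0_sqr (w + a)); unfold Rsqr in *; nra.
Qed.

Lemma moebius_ratio_lower_bound (w a b s : R) :
  0 <= w + a <= s * b -> 0 < b ->
  / (s ^ 2 + 1) <= ((w - a) ^ 2 + b ^ 2) / ((w + a) ^ 2 + b ^ 2).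
Proof.
  intros [Hwa_ge Hwa_le] Hb.
  assert (Hs2 : 0 <= s ^ 2) by apply pow2_ge_0.
  assert (Hb2 : 0 < b ^ 2) by (apply pow_lt; exact Hb).
  assert (Hsq : (w + a) ^ 2 <= s ^ 2 * b ^ 2)
    by (rewrite <- Rpow_mult_distr; apply pow_incr; lra).
  assert (Hnum : b ^ 2 <= (w - a) ^ 2 + b ^ 2) by (pose proof (pow2_ge_0 (w - a)); lra).
  assert (Hden : (w + a) ^ 2 + b ^ 2 <= (s ^ 2 + 1) * ((w - a) ^ 2 + b ^ 2)).
  { apply Rle_trans with ((s ^ 2 + 1) * b ^ 2); [lra|].
    apply Rmult_le_compat_l; lra. }
  assert (HD : 0 < (w + a) ^ 2 + b ^ 2) by (pose proof (pow2_ge_0 (w + a)); lra).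
  apply Rmult_le_reg_l with (s ^ 2 + 1); [lra|].
  rewrite Rinv_r by lra.
  apply Rmult_le_reg_r with ((w + a) ^ 2 + b ^ 2); [lra|].
  replace ((s ^ 2 + 1) * (((w - a) ^ 2 + b ^ 2) / ((w + a) ^ 2 + b ^ 2))
             * ((w + a) ^ 2 + b ^ 2))
    with ((s ^ 2 + 1) * ((w - a) ^ 2 + b ^ 2)) by (field; apply Rgt_not_eq, HD).
  lra.
Qed.

Lemma exp_opp_sqr_lt_inv (b K : R) : 0 < K <= b -> exp (- b) ^ 2 < / K.
Proof.
  intros [HK HKb].
  pose proof (exp_ineq1 b ltac:(lra)) as Hexp.
  assert (HKexp : K < exp b ^ 2) by nra.
  rewrite exp_Ropp, pow_inv.
  apply Rinv_lt_contravar; [nra | exact HKexp].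
Qed.

Lemma cv_infty_minorant (u v : nat -> R) (c : R) :
  0 < c -> (forall n, c * u n <= v n) -> cv_infty u -> cv_infty v.
Proof.
  intros Hc Huv Hu M; destruct (Hu (M / c)) as [N HN].
  exists N; intros n Hn; specialize (HN n Hn); specialize (Huv n).
  apply Rmult_lt_compat_l with (r := c) in HN; [|exact Hc].
  replace (c * (M / c)) with M in HN by (field; lra); lra.
Qed.

Lemma le_inv_mul_of_mul_le (c x y : R) : 0 < c -> y >= c * x -> x <= / c * y.
Proof.
  intros Hc Hxy; apply Rmult_le_reg_l with c; [exact Hc|].
  rewrite <- Rmult_assoc, Rinv_r; lra.
Qed.

Theorem lemma5p2 (omega a b : nat -> R) :
  (forall m, 0 < omega m) ->
  cv_infty omega ->
  (forall m, 0 <= a m /\ 0 <= b m) ->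
  (exists c1 c2 : R, 0 < c1 /\ 0 < c2 /\
     forall m, b m >= c1 * omega m /\ b m >= c2 * a m) ->
  exists N : nat, forall m : nat, (N <= m)%nat ->
    let z : Cplx := (a m, - b m) in
    let lhs : Cplx := Cdiv (Csub (RtoC (omega m)) z) (Cadd (RtoC (omega m)) z) in
    lhs <> Cexp (Copp (Cmul Ci z)) /\
    lhs <> Copp (Cexp (Copp (Cmul Ci z))).
Proof.
  intros Homega Homega_inf Hab [c1 [c2 [Hc1 [Hc2 Hc]]]].
  set (s := / c1 + / c2).
  assert (Hb_inf : cv_infty b)
    by (apply (cv_infty_minorant omega b c1 Hc1); [intros m; apply Rge_le, Hc | exact Homega_inf]).
  destruct (Hb_inf (s ^ 2 + 1)) as [N HN].
  exists N; intros m Hm z lhs.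
  pose proof (Homega m); destruct (Hab m); destruct (Hc m) as [Hbo Hba].
  specialize (HN m Hm).
  assert (Hsum : omega m + a m <= s * b m)
    by (pose proof (le_inv_mul_of_mul_le c1 _ _ Hc1 Hbo); pose proof (le_inv_mul_of_mul_le c2 _ _ Hc2 Hba);
        unfold s; lra).
  apply neq_pm_of_Cnorm2_lt.
  unfold lhs, z; rewrite Cnorm2_exp_opp_mul_i, Cnorm2_moebius by nra; simpl.
  apply Rlt_le_trans with (/ (s ^ 2 + 1)).
  - apply exp_opp_sqr_lt_inv; nra.
  - apply moebius_ratio_lower_bound; [split|]; nra.
Qed.
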